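(* Let $M,N\in\mathbb{N}$ and let $E$ be the Motzkin code of $\mathbf{M}(M,N)$. Its generating function $f(E,z)=\sum_{u\in E}z^{|u|}$ (a formal power series) satisfies $$f(E,z)^2+(Nz-1)f(E,z)+Mz^2=0,$$ and hence $f(E,z)=\frac12\left\{1-Nz-\sqrt{(1-Nz)^2-4Mz^2}\right\}$.
   Context: Alphabet $\Sigma=\{\lambda_1,\dots,\lambda_M,\rho_1,\dots,\rho_M,1_1,\dots,1_N\}$. $\mathcal{M}(M,N)$ is the monoid with zero generated by $\Sigma$ and an identity $\mathbf{1}$, subject only to the relations $\lambda_i\rho_i=\mathbf{1}$, $\lambda_i\rho_j=0$ ($i\neq j$), each $1_i$ acts as the identity ($1_i\alpha=\alpha 1_i=\alpha$, $1_i1_j=\mathbf 1$), and $0$ is absorbing; no other relations. $\mathit{red}:\Sigma^*\to\mathcal{M}(M,N)$ sends a word to the product of its letters (empty word to $\mathbf 1$). The Motzkin shift is $\mathbf{M}(M,N)=\{x\in\Sigma^{\mathbb Z}:\mathit{red}(x_i\cdots x_j)\neq 0\ \forall i\le j\}$, and $\mathcal B_n(\mathbf M(M,N))$ denotes its set of blocks of length $n$. The Motzkin code is $E=\bigcup_{n\ge1}E_n$ with $E_n=\{w\in\mathcal B_n(\mathbf M(M,N)): w=\lambda_i v\rho_i \text{ for some } 1\le i\le M \text{ and some word } v \text{ with } \mathit{red}(v)=\mathbf 1\}$; $|u|$ denotes the length of $u$. *)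

From Stdlib Require Import Relations ClassicalEpsilon.
From mathcomp Require Import all_boot all_order all_algebra.
Set Implicit Arguments. Unset Strict Implicit. Unset Printing Implicit Defensive.
Import Order.TTheory GRing.Theory Num.Theory.

(* Alphabet Sigma = {lambda_1..lambda_M} + {rho_1..rho_M} + {1_1..1_N}
   (indices shifted to start at 0). *)
Definition Sigma (M N : nat) : finType := ('I_M + 'I_M + 'I_N)%type.
Definition lam {M N : nat} (i : 'I_M) : Sigma M N := inl (inl i).
Definition rho {M N : nat} (i : 'I_M) : Sigma M N := inl (inr i).
Definition one {M N : nat} (i : 'I_N) : Sigma M N := inr i.

(* The monoid with zero M(M,N), given by its presentation: elements are words
   over Sigma extended by a zero letter (None), modulo the congruence generated
   by the defining relations. *)
Definition zword (M N : nat) := seq (option (Sigma M N)).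

Inductive defrel {M N : nat} : zword M N -> zword M N -> Prop :=
  | rel_lr (i : 'I_M) : defrel [:: Some (lam i); Some (rho i)] [::]
  | rel_lr0 (i j : 'I_M) : i <> j -> defrel [:: Some (lam i); Some (rho j)] [:: None]
  | rel_one (i : 'I_N) : defrel [:: Some (one i)] [::]
  | rel_zl (a : option (Sigma M N)) : defrel [:: None; a] [:: None]
  | rel_zr (a : option (Sigma M N)) : defrel [:: a; None] [:: None].

Inductive step {M N : nat} : zword M N -> zword M N -> Prop :=
  | step_ctx (u v l r : zword M N) : defrel l r -> step (u ++ l ++ v) (u ++ r ++ v).

Definition cong {M N : nat} : relation (zword M N) := clos_refl_sym_trans _ step.

Definition red_is_zero {M N : nat} (w : seq (Sigma M N)) : Prop :=
  cong (map Some w) [:: None].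
Definition red_is_one {M N : nat} (w : seq (Sigma M N)) : Prop :=
  cong (map Some w) [::].

Definition block {T : Type} (x : int -> T) (i : int) (n : nat) : seq T :=
  mkseq (fun k => x (i + k%:Z)%R) n.

Definition in_motzkin_shift {M N : nat} (x : int -> Sigma M N) : Prop :=
  forall (i : int) (n : nat), ~ red_is_zero (block x i n.+1).

Definition is_block {M N : nat} (n : nat) (w : seq (Sigma M N)) : Prop :=
  size w = n /\
  exists x : int -> Sigma M N, in_motzkin_shift x /\ exists i : int, block x i n = w.

Definition in_code {M N : nat} (n : nat) (w : seq (Sigma M N)) : Prop :=
  is_block n w /\
  exists (i : 'I_M) (v : seq (Sigma M N)), w = lam i :: rcons v (rho i) /\ red_is_one v.

Definition pb (P : Prop) : bool :=
  if excluded_middle_informative P then true else false.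

Definition series := nat -> rat.
Local Open Scope ring_scope.
Definition psC (c : rat) : series := fun n => if n == 0%N then c else 0.
Definition psX : series := fun n => if n == 1%N then 1 else 0.
Definition psadd (a b : series) : series := fun n => a n + b n.
Definition psopp (a : series) : series := fun n => - a n.
Definition psscale (c : rat) (a : series) : series := fun n => c * a n.
Definition psmul (a b : series) : series :=
  fun n => \sum_(k < n.+1) a k * b (n - k)%N.

(* f(E,z) = sum_{u in E} z^|u| ; coefficient of z^n is #E_n for n >= 1,
   and 0 for n = 0 since E only contains words of length >= 1. *)
Definition motzkin_gf (M N : nat) : series := fun n =>
  if n == 0%N then 0
  else (#|[set w : n.-tuple (Sigma M N) | pb (in_code n (tval w))]|)%:R.

(* The nonzero elements of M(M,N) have normal forms rho_i1 .. rho_ip lambda_j1 ..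
   lambda_jq, on which right multiplication by a letter acts as a stack machine.
   Hence red v = 1 exactly when v is balanced: its lambda's and rho's match like
   parentheses of M colours, the letters 1_j being ignored. A nonempty balanced
   word is a block of the shift, because every factor of its periodic extension
   lies inside a power of it, which is balanced. So E_n is the set of words
   lambda_i v rho_i of length n with v balanced, and splitting v after its first
   letter (or after its first balanced factor lambda_k .. rho_k) gives
     #E_n = M [n = 2] + N #E_(n-1) + sum_a #E_a #E_(n-a),
   that is f = M z^2 + N z f + f^2. Completing the square, g = 1 - N z - 2 f
   has g(0) = 1 and g^2 = (1 - N z)^2 - 4 M z^2. *)

From Pilot Require Import Defs.
From Stdlib Require Import Relations ClassicalEpsilon.
From mathcomp Require Import all_boot all_order all_algebra zify ring lra.

Set Implicit Arguments. Unset Strict Implicit. Unset Printing Implicit Defensive.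
Import Order.TTheory GRing.Theory Num.Theory.

Lemma pbP (P : Prop) : reflect P (pb P).
Proof. by rewrite /pb; case: excluded_middle_informative => h; constructor. Qed.

Lemma nth_flatten_nseq (T : Type) (x0 : T) (w : seq T) K j :
  j < K * size w -> nth x0 (flatten (nseq K w)) j = nth x0 w (j %% size w).
Proof.
elim: K j => [|K IH] j; first by rewrite mul0n.
rewrite mulSn /= nth_cat => j_lt.
case: ltnP => [j_lt_w|w_le_j]; first by rewrite modn_small.
rewrite IH; last by move: j_lt w_le_j; move: (K * size w) => t; lia.
by rewrite -{2}(subnK w_le_j) modnDr.
Qed.

Lemma absz_modzDnat (i : int) (k n : nat) : 0 < n ->
  absz ((i + k%:Z) %% n%:Z)%Z = ((absz (i %% n%:Z)%Z + k) %% n)%N.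
Proof.
move=> n_gt0; have i_mod_ge0 : (0 <= i %% n%:Z)%Z%R.
  by apply: modz_ge0; rewrite eqz_nat -lt0n.
by rewrite -modzDml -[(i %% n%:Z)%Z]gez0_abs // -PoszD modz_nat.
Qed.

Lemma uniq_flatten_map (A B : eqType) (f : A -> seq B) s :
  uniq s -> {in s, forall a, uniq (f a)} ->
  (forall a b x, a \in s -> b \in s -> x \in f a -> x \in f b -> a = b) ->
  uniq (flatten (map f s)).
Proof.
elim: s => [|a s IH] //= /andP[a_notin_s s_uniq] f_uniq f_disj.
rewrite cat_uniq f_uniq ?mem_head // IH //; last first.
- by move=> a' b' x ha hb; apply: f_disj; rewrite inE ?ha ?hb orbT.
- by move=> a' ha; apply: f_uniq; rewrite inE ha orbT.
rewrite andbT; apply/hasPn => x /flattenP [t /mapP [b hb ->] hx].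
apply/negP => hx'.
have a_eq_b : a = b by apply: (f_disj a b x); rewrite ?mem_head ?inE ?hb ?orbT.
by move: a_notin_s; rewrite a_eq_b hb.
Qed.

Section MotzkinCode.
Variables M N : nat.
Notation S := (Sigma M N).

(* [Some (rs, ls)] encodes the nonzero element [rho_rs lambda_(rev ls)], with the
   lambda's kept as a stack; [None] encodes 0. *)
Definition nform := option (seq 'I_M * seq 'I_M).

Definition nf_mul (s : nform) (a : option S) : nform :=
  match s, a with
  | Some (rs, ls), Some c =>
    match c with
    | inl (inl i) => Some (rs, i :: ls)
    | inl (inr i) =>
        if ls is j :: ls' then (if i == j then Some (rs, ls') else None)
        else Some (rcons rs i, [::])
    | inr _ => Some (rs, ls)
    end
  | _, _ => None
  end.

Fixpoint nf_eval (s : nform) (w : zword M N) : nform :=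
  if w is a :: w' then nf_eval (nf_mul s a) w' else s.

Lemma nf_eval_cat s u v : nf_eval s (u ++ v) = nf_eval (nf_eval s u) v.
Proof. by elim: u s => /=. Qed.

Lemma nf_mul0 s : nf_mul s None = None.
Proof. by case: s => [[]|]. Qed.

Lemma nf_eval0 w : nf_eval None w = None.
Proof. by elim: w. Qed.

Lemma nf_eval_defrel (l r : zword M N) s : defrel l r -> nf_eval s l = nf_eval s r.
Proof.
case=> [i|i j ij|i|a|a] /=.
- by case: s => [[rs [|j ls]]|] //=; rewrite eqxx.
- by case: s => [[rs [|k ls]]|] //=; case: eqP => // /esym.
- by case: s => [[rs [|k ls]]|].
- by case: s => [[rs [|k ls]]|].
- by rewrite !nf_mul0.
Qed.

Lemma nf_eval_cong (a b : zword M N) s : cong a b -> nf_eval s a = nf_eval s b.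
Proof.
elim=> [x y [u v l r lr]|//|//|x y z _ -> //].
by rewrite !nf_eval_cat (nf_eval_defrel _ lr).
Qed.

Lemma cong_ctx (a b l r : zword M N) :
  cong a b -> cong (l ++ a ++ r) (l ++ b ++ r).
Proof.
elim=> [x y [u v l0 r0 H]|x|x y _ H|x y z _ H1 _ H2].
- by apply: rst_step; have := step_ctx (l ++ u) (v ++ r) H; rewrite -!catA.
- exact: rst_refl.
- exact: rst_sym.
- exact: rst_trans H2.
Qed.

Fixpoint dyck_run (ls : seq 'I_M) (w : seq S) : option (seq 'I_M) :=
  match w with
  | [::] => Some ls
  | inl (inl i) :: w' => dyck_run (i :: ls) w'
  | inl (inr i) :: w' =>
      if ls is j :: ls' then (if i == j then dyck_run ls' w' else None) else None
  | inr _ :: w' => dyck_run ls w'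
  end.

Notation balanced w := (dyck_run [::] w = Some [::]).

Lemma dyck_run_cat ls u v :
  dyck_run ls (u ++ v) = obind (dyck_run^~ v) (dyck_run ls u).
Proof.
elim: u ls => [|[[i|i]|j] u IH] ls //=.
by case: ls => [|k ls] //; case: eqP.
Qed.

Lemma dyck_run_catr ls w l b :
  dyck_run ls w = Some l -> dyck_run (ls ++ b) w = Some (l ++ b).
Proof.
elim: w ls => [|[[i|i]|j] w IH] ls /=; [by case=> -> | exact: (IH (i :: ls)) | | exact: IH].
by case: ls => [|k ls] //=; case: eqP => // _; apply: IH.
Qed.

Lemma balanced_cat u v : balanced u -> balanced v -> balanced (u ++ v).
Proof. by rewrite dyck_run_cat => ->. Qed.

Lemma balanced_wrap i v : balanced v -> balanced (lam i :: rcons v (rho i)).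
Proof.
by move=> bal_v; rewrite /= -cats1 dyck_run_cat (dyck_run_catr [:: i] bal_v) /= eqxx.
Qed.

Lemma nf_eval_dyck ls v l :
  dyck_run ls v = Some l -> nf_eval (Some ([::], ls)) (map Some v) = Some ([::], l).
Proof.
elim: v ls => [|[[i|i]|j] v IH] ls /=; [by case=> -> | exact: (IH (i :: ls)) | | exact: IH].
by case: ls => [|k ls] //=; case: eqP => // _; apply: IH.
Qed.

Lemma nf_eval_size_rho rs ls w rs' l :
  nf_eval (Some (rs, ls)) w = Some (rs', l) -> size rs <= size rs'.
Proof.
elim: w rs ls => [|[[[i|i]|j]|] w IH] rs ls /=; [by case=> -> | exact: IH | | exact: IH |].
- case: ls => [|k ls] /=; first by move/IH; rewrite size_rcons; apply: ltnW.
  by case: eqP => _; [apply: IH | rewrite nf_eval0].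
- by rewrite nf_eval0.
Qed.

Lemma dyck_nf_eval ls v l :
  nf_eval (Some ([::], ls)) (map Some v) = Some ([::], l) -> dyck_run ls v = Some l.
Proof.
elim: v ls => [|[[i|i]|j] v IH] ls /=; [by case=> -> | exact: (IH (i :: ls)) | | exact: IH].
case: ls => [|k ls] /=; first by move/nf_eval_size_rho.
by case: eqP => _; [apply: IH | rewrite nf_eval0].
Qed.

Lemma nf_eval_zero_catr (w : zword M N) rs0 ls0 rs ls :
  nf_eval (Some (rs0, ls0)) w = None -> nf_eval (Some (rs, ls0 ++ ls)) w = None.
Proof.
elim: w rs0 ls0 rs ls => [|[[[i|i]|j]|] w IH] rs0 ls0 rs ls //=.
- exact: (IH _ (i :: ls0)).
- case: ls0 => [|k ls0] /=; last by case: eqP => _ H; [apply: IH H | rewrite nf_eval0].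
  case: ls => [|k ls] /=; first exact: (IH _ [::]).
  by case: eqP => _ H; [apply: (IH _ [::] _ ls H) | rewrite nf_eval0].
- exact: IH.
Qed.

Lemma dyck_run_split u k ls l :
  dyck_run (k :: ls) u = Some l -> size l <= size ls ->
  exists u1 u2, [/\ u = u1 ++ rho k :: u2, balanced u1 & dyck_run ls u2 = Some l].
Proof.
elim: {u}(size u) {-2}u (leqnn (size u)) k ls l => [|n IH] [|c u] //= size_u k ls l;
  try by case=> <-; rewrite ltnn.
case: c => [[i|i]|j] run_u size_l.
- have [t1 [t2 [u_eq bal_t1 run_t2]]] := IH u size_u _ _ _ run_u (leqW size_l).
  have size_t2 : size t2 <= n by move: size_u; rewrite u_eq size_cat /=; lia.
  have [t3 [t4 [t2_eq bal_t3 run_t4]]] := IH t2 size_t2 _ _ _ run_t2 size_l.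
  exists (lam i :: t1 ++ rho i :: t3), t4; split=> //; first by rewrite u_eq t2_eq /= -catA.
  by rewrite /= dyck_run_cat (dyck_run_catr [:: i] bal_t1) /= eqxx.
- by move: run_u; case: eqP => // -> run_u; exists [::], u.
- have [t1 [t2 [u_eq bal_t1 run_t2]]] := IH u size_u _ _ _ run_u size_l.
  by exists (Defs.one j :: t1), t2; rewrite u_eq.
Qed.

Lemma red_is_one_balanced (v : seq S) : red_is_one v <-> balanced v.
Proof.
split=> [one_v|].
  by apply: dyck_nf_eval; rewrite (nf_eval_cong _ one_v).
elim: {v}(size v) {-2}v (leqnn (size v)) => [|n IH] [|c v] //= size_v;
  try by move=> _; apply: rst_refl.
case: c => [[k|k]|j] // bal_v.
- have [u1 [u2 [v_eq bal_u1 bal_u2]]] := dyck_run_split bal_v (leqnn 0).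
  have [size_u1 size_u2] : size u1 <= n /\ size u2 <= n.
    by move: size_v; rewrite v_eq size_cat /=; lia.
  rewrite v_eq /red_is_one /= map_cat.
  apply: rst_trans (_ : cong ([:: Some (lam k)] ++ [::] ++ Some (rho k) :: map Some u2) _).
    exact: (cong_ctx [:: Some (lam k)] _ (IH _ size_u1 bal_u1)).
  apply: rst_trans (IH _ size_u2 bal_u2); apply: rst_step.
  exact: (step_ctx [::] _ (rel_lr k)).
- apply: rst_trans (IH _ size_v bal_v); apply: rst_step.
  exact: (step_ctx [::] _ (rel_one (M := M) j)).
Qed.

Lemma balanced_factor_nonzero (u v w : seq S) :
  balanced (u ++ v ++ w) -> ~ red_is_zero v.
Proof.
move=> /nf_eval_dyck; rewrite !map_cat !nf_eval_cat => + zero_v.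
have nf_v : nf_eval (Some ([::], [::])) (map Some v) = None by rewrite (nf_eval_cong _ zero_v).
case: (nf_eval _ (map Some u)) => [[rs ls]|]; last by rewrite !nf_eval0.
by rewrite (nf_eval_zero_catr rs ls nf_v) nf_eval0.
Qed.

Lemma balanced_pow (w : seq S) K : balanced w -> balanced (flatten (nseq K w)).
Proof. by move=> bal_w; elim: K => [|K IH] //=; apply: balanced_cat. Qed.

Lemma balanced_is_block (w : seq S) : 0 < size w -> balanced w -> is_block (size w) w.
Proof.
move=> n_gt0 bal_w; split=> //.
have [d _] : exists d : S, true by case: w n_gt0 {bal_w} => [|d w'] // _; exists d.
set n := size w in n_gt0 *.
pose x := fun k : int => nth d w (absz (k %% n%:Z)%Z).
exists x; split; last first.
  exists 0%R; apply: (@eq_from_nth _ d); first by rewrite size_mkseq.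
  move=> k; rewrite size_mkseq => k_lt_n; rewrite nth_mkseq // /x.
  by rewrite absz_modzDnat // mod0z /= add0n modn_small.
move=> i m.
set a := absz (i %% n%:Z)%Z; set K := a + m.+1; set W := flatten (nseq K w).
have K_le : K <= K * n by rewrite leq_pmulr.
have size_W : size W = K * n by rewrite size_flatten /shape map_nseq sumn_nseq mulnC.
have -> : block x i m.+1 = take m.+1 (drop a W).
  apply: (@eq_from_nth _ d).
    by rewrite size_mkseq size_take size_drop size_W; case: ltnP => //; lia.
  move=> k; rewrite size_mkseq => k_lt; rewrite nth_mkseq // /x.
  rewrite nth_take // nth_drop nth_flatten_nseq; first by rewrite absz_modzDnat.
  by rewrite /K in K_le *; lia.
apply: (@balanced_factor_nonzero (take a W) _ (drop m.+1 (drop a W))).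
by rewrite !cat_take_drop balanced_pow.
Qed.

Definition is_code (w : seq S) : Prop :=
  exists i v, w = lam i :: rcons v (rho i) /\ balanced v.

Lemma code_balanced w : is_code w -> balanced w.
Proof. by move=> [i [v [-> bal_v]]]; apply: balanced_wrap. Qed.

Lemma in_code_is_code n w : size w = n -> in_code n w <-> is_code w.
Proof.
move=> size_w; split=> [[_ [i [v [w_eq /red_is_one_balanced bal_v]]]]|code_w].
  by exists i, v.
have [i [v [w_eq bal_v]]] := code_w.
split; last by exists i, v; split=> //; apply/red_is_one_balanced.
by rewrite -size_w; apply: balanced_is_block (code_balanced code_w); rewrite w_eq.
Qed.

Lemma code_prefix_unbalanced w k :
  is_code w -> 0 < k < size w -> ~ balanced (take k w).
Proof.
move=> [i [v [-> bal_v]]]; case: k => [|k] //=; rewrite size_rcons ltnS ltnS => k_le.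
rewrite -cats1 takel_cat //.
have [l run_take] : exists l, dyck_run [::] (take k v) = Some l.
  move: bal_v; rewrite -{1}(cat_take_drop k v) dyck_run_cat.
  by case: (dyck_run [::] _) => [l|] // _; exists l.
by move/(dyck_run_catr [:: i]): run_take => /= ->; case: l.
Qed.

Lemma code_prefix_free p1 p2 r1 r2 :
  is_code p1 -> is_code p2 -> p1 ++ r1 = p2 ++ r2 -> p1 = p2.
Proof.
wlog le12 : p1 p2 r1 r2 / size p1 <= size p2.
  move=> hw c1 c2 E; case: (leqP (size p1) (size p2)) => [le12|/ltnW le21].
    exact: hw E.
  by apply/esym/(hw p2 p1 r2 r1).
move=> c1 c2 E.
have take_p2 : take (size p1) p2 = p1 by rewrite -(takel_cat r2 le12) -E take_size_cat.
case: (ltnP (size p1) (size p2)) => [lt12|ge12]; last by rewrite -take_p2 take_oversize.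
have [i1 [v1 [p1_eq _]]] := c1.
case: (code_prefix_unbalanced (k := size p1) c2); last by rewrite take_p2 code_balanced.
by rewrite lt12 andbT p1_eq.
Qed.

Definition words n : seq (seq S) := map val (enum {: n.-tuple S}).

Lemma card_tuple_count n (P : pred (seq S)) :
  #|[set w : n.-tuple S | P w]| = count P (words n).
Proof.
rewrite cardE size_filter /words count_map -enumT.
by apply: eq_count => t; rewrite /= inE.
Qed.

Lemma words_uniq n : uniq (words n).
Proof. by rewrite map_inj_uniq ?enum_uniq //; apply: val_inj. Qed.

Lemma mem_words n w : (w \in words n) = (size w == n).
Proof.
apply/mapP/eqP => [[t _ ->]|size_w]; first exact: size_tuple.
by exists (Tuple (introT eqP size_w)); rewrite ?mem_enum.
Qed.

Definition codes n := [seq w <- words n | pb (is_code w)].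

Lemma codes_uniq n : uniq (codes n).
Proof. exact/filter_uniq/words_uniq. Qed.

Lemma mem_codes n w : w \in codes n <-> is_code w /\ size w = n.
Proof.
rewrite mem_filter mem_words; split=> [/andP [/pbP code_w /eqP //]|[code_w ->]].
by rewrite eqxx andbT; apply/pbP.
Qed.

Lemma codes0 : codes 0 = [::].
Proof.
case E: (codes 0) => [|w ws] //.
by have /mem_codes [[i [v [-> _]]]] : w \in codes 0 by rewrite E mem_head.
Qed.

Lemma motzkin_gf_codes n : motzkin_gf M N n = (size (codes n))%:R%R.
Proof.
rewrite /motzkin_gf; case: eqP => [->|_]; first by rewrite codes0.
rewrite (@card_tuple_count n (fun w => pb (in_code n w))) size_filter.
congr (_%:R)%R; apply: eq_in_count => w.
rewrite mem_words => /eqP size_w.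
by case: (in_code_is_code size_w) => code_of_in in_of_code; apply/pbP/pbP.
Qed.

Definition insert_one (j : 'I_N) (w : seq S) : seq S :=
  if w is a :: r then a :: Defs.one j :: r else [::].
Definition nest (p q : seq S) : seq S := if q is a :: r then a :: p ++ r else [::].

(* The inner word [v] of a code word [lam_i v rho_i] is empty, starts with a
   letter [1_j], or starts with a code word [p]; in the last case
   [lam_i v rho_i = nest p q] for a code word [q]. *)
Definition codes_bare n : seq (seq S) :=
  if n == 2 then [seq [:: lam i; rho i] | i <- enum 'I_M] else [::].
Definition codes_one n := [seq insert_one j w | j <- enum 'I_N, w <- codes n.-1].
Definition codes_nest n :=
  flatten [seq [seq nest p q | p <- codes a, q <- codes (n - a)] | a <- iota 0 n.+1].
Definition codes_decomp n := codes_bare n ++ codes_one n ++ codes_nest n.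

Lemma code_decomp n w : is_code w -> size w = n -> w \in codes_decomp n.
Proof.
move=> code_w size_w; have [i [v [w_eq bal_v]]] := code_w.
rewrite /codes_decomp 2!mem_cat; case: v w_eq bal_v => [|[[k|k]|j] v] w_eq bal_v //.
- rewrite /codes_bare -size_w w_eq /=.
  by apply/orP; left; apply: map_f; apply: mem_enum.
- have [u1 [u2 [v_eq bal_u1 bal_u2]]] := dyck_run_split bal_v (leqnn 0).
  set p := lam k :: rcons u1 (rho k); set q := lam i :: rcons u2 (rho i).
  have w_nest : w = nest p q by rewrite w_eq v_eq /= rcons_cat cat_rcons.
  have size_pq : size p + size q = n.
    by rewrite -size_w w_nest /= size_cat addSn addnS.
  apply/orP; right; apply/orP; right; rewrite /codes_nest; apply/flattenP.
  exists [seq nest x y | x <- codes (size p), y <- codes (n - size p)].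
    by apply/mapP; exists (size p); rewrite // mem_iota add0n ltnS -size_pq leq_addr.
  rewrite w_nest; apply: allpairs_f; apply/mem_codes.
    by split=> //; exists k, u1.
  by split; [exists i, u2 | rewrite -size_pq addKn].
- apply/orP; right; apply/orP; left.
  have -> : w = insert_one j (lam i :: rcons v (rho i)) by rewrite w_eq.
  apply: allpairs_f; first exact: mem_enum.
  by apply/mem_codes; split; [exists i, v | rewrite -size_w w_eq /= !size_rcons].
Qed.

Lemma decomp_code n w : 0 < n -> w \in codes_decomp n -> is_code w /\ size w = n.
Proof.
move=> n_gt0; rewrite /codes_decomp 2!mem_cat; case/or3P.
- rewrite /codes_bare; case: eqP => [->|] //; case/mapP => i _ ->.
  by split=> //; exists i, [::].
- case/allpairsP => [[j q]] /= [_ /mem_codes [[i [v [-> bal_v]]] size_q] ->].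
  split; first by exists i, (Defs.one j :: v).
  by move: size_q; rewrite /= !size_rcons => ->; rewrite prednK.
- case/flattenP => _ /mapP [a a_in ->] /allpairsP [[p q]] /=.
  case=> [/mem_codes [code_p size_p] /mem_codes [[i [v [-> bal_v]]] size_q] ->] /=.
  split.
    exists i, (p ++ v); rewrite rcons_cat; split=> //.
    exact: balanced_cat (code_balanced code_p) bal_v.
  move: a_in size_q; rewrite mem_iota add0n ltnS /= size_cat !size_rcons size_p.
  by move=> a_le size_q; rewrite -addnS size_q subnKC.
Qed.

Definition second_letter_kind (w : seq S) : nat :=
  match w with
  | _ :: inl (inl _) :: _ => 0
  | _ :: inl (inr _) :: _ => 1
  | _ :: inr _ :: _ => 2
  | _ => 3
  end.

Lemma kind_codes_bare n w : w \in codes_bare n -> second_letter_kind w = 1.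
Proof. by rewrite /codes_bare; case: eqP => _ //; case/mapP => i _ ->. Qed.

Lemma kind_codes_one n w : w \in codes_one n -> second_letter_kind w = 2.
Proof.
by case/allpairsP => [[j q]] /= [_ /mem_codes [[i [v [-> _]]] _] ->].
Qed.

Lemma kind_codes_nest n w : w \in codes_nest n -> second_letter_kind w = 0.
Proof.
case/flattenP => _ /mapP [a _ ->] /allpairsP [[p q]] /=.
by case=> [/mem_codes [[k [u [-> _]]] _] /mem_codes [[i [v [-> _]]] _] ->].
Qed.

Lemma insert_one_inj j j' q q' :
  is_code q -> is_code q' -> insert_one j q = insert_one j' q' -> (j, q) = (j', q').
Proof. by move=> [i [v [-> _]]] [i' [v' [-> _]]] [-> -> ->]. Qed.

Lemma nest_inj p p' q q' : is_code p -> is_code p' -> is_code q -> is_code q' ->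
  nest p q = nest p' q' -> p = p' /\ q = q'.
Proof.
move=> code_p code_p' [i [v [-> _]]] [i' [v' [-> _]]] [-> pv_eq].
have p_eq := code_prefix_free code_p code_p' pv_eq.
by move/eqP: pv_eq; rewrite p_eq eqseq_cat // => /andP [_ /eqP ->].
Qed.

Lemma codes_decomp_uniq n : uniq (codes_decomp n).
Proof.
rewrite /codes_decomp cat_uniq (cat_uniq (codes_one n)); apply/and5P; split.
- rewrite /codes_bare; case: eqP => _ //.
  by rewrite map_inj_uniq ?enum_uniq // => i i' [].
- apply/hasPn => w; rewrite mem_cat => /orP [/kind_codes_one|/kind_codes_nest] kind_w;
    by apply/negP => /kind_codes_bare; rewrite kind_w.
- apply: allpairs_uniq; [exact: enum_uniq | exact: codes_uniq |].
  move=> [j q] [j' q'] /allpairsP [[? ?]] /= [_ /mem_codes [code_q _] [-> ->]].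
  by case/allpairsP => [[? ?]] /= [_ /mem_codes [code_q' _] [-> ->]]; apply: insert_one_inj.
- by apply/hasPn => w /kind_codes_nest kind_w; apply/negP => /kind_codes_one; rewrite kind_w.
apply: uniq_flatten_map; first exact: iota_uniq.
- move=> a _; apply: allpairs_uniq; [exact: codes_uniq | exact: codes_uniq |].
  move=> [p q] [p' q'] /allpairsP [[? ?]] /= [/mem_codes [cp _] /mem_codes [cq _] [-> ->]].
  case/allpairsP => [[? ?]] /= [/mem_codes [cp' _] /mem_codes [cq' _] [-> ->]] /= E.
  by have [-> ->] := nest_inj cp cp' cq cq' E.
- move=> a b w _ _ /allpairsP [[p q]] /= [/mem_codes [cp size_p] /mem_codes [cq _] ->].
  case/allpairsP => [[p' q']] /= [/mem_codes [cp' size_p'] /mem_codes [cq' _] E].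
  by have [p_eq _] := nest_inj cp cp' cq cq' E; rewrite -size_p -size_p' p_eq.
Qed.

Lemma size_codes_rec n : 0 < n ->
  size (codes n) = (if n == 2 then M else 0) + N * size (codes n.-1)
                   + \sum_(a < n.+1) size (codes a) * size (codes (n - a)).
Proof.
move=> n_gt0.
have codes_perm : perm_eq (codes n) (codes_decomp n).
  apply: uniq_perm; [exact: codes_uniq | exact: codes_decomp_uniq |] => w.
  apply/idP/idP => [/mem_codes [code_w size_w] | /(decomp_code n_gt0) /mem_codes //].
  exact: code_decomp.
rewrite (perm_size codes_perm) /codes_decomp 2!size_cat addnA; congr (_ + _ + _).
- by rewrite /codes_bare; case: eqP => _ //; rewrite size_map size_enum_ord.
- by rewrite size_allpairs size_enum_ord.
rewrite size_flatten /shape -map_comp sumnE big_map.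
have -> : iota 0 n.+1 = index_iota 0 n.+1 by rewrite /index_iota subn0.
by rewrite big_mkord; apply: eq_bigr => a _; rewrite /= size_allpairs.
Qed.

End MotzkinCode.

Section PowerSeries.
Local Open Scope ring_scope.
Implicit Types (a b c f h : series) (k : rat).

Lemma psmulC a b n : psmul a b n = psmul b a n.
Proof.
rewrite /psmul (reindex_inj rev_ord_inj); apply: eq_bigr => i _ /=.
by rewrite subSS subKn 1?mulrC // -ltnS.
Qed.

Lemma psmulDl a b c n : psmul (psadd a b) c n = psmul a c n + psmul b c n.
Proof. by rewrite /psmul -big_split; apply: eq_bigr => i _; rewrite mulrDl. Qed.

Lemma psmulZl k a c n : psmul (psscale k a) c n = k * psmul a c n.
Proof. by rewrite /psmul mulr_sumr; apply: eq_bigr => i _; rewrite mulrA. Qed.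

Lemma psmul_psC k c n : psmul (psC k) c n = k * c n.
Proof.
rewrite /psmul big_ord_recl big1 ?addr0 ?subn0 // => i _.
by rewrite /psC /= mul0r.
Qed.

Lemma psmul_psX c n : psmul psX c n = if n is m.+1 then c m else 0.
Proof.
rewrite /psmul big_ord_recl /psX /= mul0r add0r.
case: n => [|m]; first by rewrite big_ord0.
rewrite big_ord_recl big1 => [|i _]; last by rewrite /= mul0r.
by rewrite /= mul1r subSS subn0 addr0.
Qed.

Lemma psmul_psXpsX n : psmul psX psX n = (n == 2)%:R.
Proof. by rewrite psmul_psX /psX; case: n => [|[|[|n]]]. Qed.

Lemma psmul_addZ_sqr h f k n :
  psmul (psadd h (psscale k f)) (psadd h (psscale k f)) n
  = psmul h h n + 2 * k * psmul h f n + k ^+ 2 * psmul f f n.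
Proof.
rewrite psmulDl psmulZl !(psmulC _ (psadd h _)) !psmulDl !psmulZl (psmulC f h).
ring.
Qed.

End PowerSeries.

Local Open Scope ring_scope.

Lemma motzkin_gf_quadratic M N n :
  let f := motzkin_gf M N in
  psmul f f n + psmul (psadd (psscale N%:R psX) (psC (-1))) f n
  + M%:R * psmul psX psX n = 0.
Proof.
move=> f; rewrite psmulDl psmulZl psmul_psC psmul_psX psmul_psXpsX.
case: n => [|m]; first by rewrite /psmul big_ord1 /f /motzkin_gf /=; ring.
have ff : psmul f f m.+1 =
    (\sum_(a < m.+2) size (codes M N a) * size (codes M N (m.+1 - a)))%:R.
  by rewrite /psmul natr_sum; apply: eq_bigr => a _; rewrite /f !motzkin_gf_codes natrM.
rewrite ff /f !motzkin_gf_codes (@size_codes_rec M N m.+1) // -[m.+1.-1]/m.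
by rewrite !natrD !natrM; case: (m.+1 == 2) => /=; ring.
Qed.

Theorem theorem2p1 (M N : nat) :
  let f := motzkin_gf M N in
  (forall n : nat,
     psadd (psadd (psmul f f) (psmul (psadd (psscale N%:R psX) (psC (-1))) f))
           (psscale M%:R (psmul psX psX)) n = 0)
  /\
  (exists g : series,
     g 0%N = 1 /\
     (forall n : nat,
        psmul g g n =
        psadd (psmul (psadd (psC 1) (psscale (- N%:R) psX))
                     (psadd (psC 1) (psscale (- N%:R) psX)))
              (psscale (- 4 * M%:R) (psmul psX psX)) n) /\
     (forall n : nat,
        f n = psscale (1 / 2) (psadd (psadd (psC 1) (psscale (- N%:R) psX)) (psopp g)) n)).
Proof.
move=> f; split=> [n|]; first exact: motzkin_gf_quadratic.
pose h := psadd (psC 1) (psscale (- N%:R) psX).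
exists (psadd h (psscale (-2) f)); split; [|split] => [|n|n].
- by rewrite /h /psadd /psscale /psC /psX /f /motzkin_gf /=; ring.
- have hf : psmul h f n = psmul f f n + M%:R * psmul psX psX n.
    move: (motzkin_gf_quadratic M N n).
    rewrite /h !psmulDl !psmulZl !psmul_psC -/f; lra.
  by rewrite psmul_addZ_sqr hf /psadd /psscale; ring.
- by rewrite -/h /psscale /psadd /psopp; field.
Qed.
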